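(* Let $K$ be a field, $A=K[x_1,\dots,x_n]$, and $P=(x_1^{e_1},\dots,x_r^{e_r})$ for some $r\le n$ and integers $2\le e_1\le\cdots\le e_r$. Let $J\subset A$ be a strongly stable ideal and $I\subset A$ a monomial ideal containing $P+J$. Fix variables $a=x_i$, $b=x_j$ with $i<j$ and an integer $t>0$. Then $J\subset \mathrm{Shift}_{a,b,t}(I)$.
   Context: A monomial ideal $J$ is strongly stable if whenever $x_k m\in J$ for a monomial $m$, then $x_l m\in J$ for all $l<k$. For a monomial ideal $I$, variables $a=x_i,b=x_j$ with $i<j$, and $t\in\mathbb{Z}_{\ge0}$, $\mathrm{Shift}_{a,b,t}(I)$ is the $K$-vector space spanned by the following monomials, where $f$ ranges over monomials divisible by neither $a$ nor $b$ and $s,l$ range over integers with $0\le s<l$: (1) $fa^sb^r$ whenever $fa^sb^r\in I$ and $r<t$; (2) $fa^sb^{s+t}$ whenever $fa^sb^{s+t}\in I$; (3) $fa^lb^{s+t}$ whenever $fa^lb^{s+t}\in I$ or $fa^sb^{l+t}\in I$; (4) $fa^sb^{l+t}$ whenever both $fa^lb^{s+t}\in I$ and $fa^sb^{l+t}\in I$. *)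

From mathcomp Require Import all_boot all_algebra.
From mathcomp Require Import mpoly.
Set Implicit Arguments. Unset Strict Implicit. Unset Printing Implicit Defensive.
Import GRing.Theory.
Local Open Scope ring_scope.

Section Defs.
Variables (n : nat) (K : fieldType).

Definition is_ideal (I : {mpoly K[n]} -> Prop) : Prop :=
  [/\ I 0,
      (forall p q, I p -> I q -> I (p + q)) &
      (forall p q, I q -> I (p * q))].

Definition monomial_ideal (I : {mpoly K[n]} -> Prop) : Prop :=
  is_ideal I /\ forall p (m : 'X_{1..n}), I p -> m \in msupp p -> I 'X_[m].

Definition strongly_stable (J : {mpoly K[n]} -> Prop) : Prop :=
  monomial_ideal J /\
  forall (m : 'X_{1..n}) (k l : 'I_n), (l < k)%N ->
    J ('X_k * 'X_[m]) -> J ('X_l * 'X_[m]).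

Definition monomial_span (S : 'X_{1..n} -> Prop) (p : {mpoly K[n]}) : Prop :=
  exists (s : seq 'X_{1..n}) (c : 'X_{1..n} -> K),
    (forall m, m \in s -> S m) /\ p = \sum_(m <- s) c m *: 'X_[m].

(* The monomial obtained from m by giving exponent ea to a = x_i and eb to b = x_j,
   keeping the cofactor f (the part not involving a, b) *)
Definition setab (i j : 'I_n) (m : 'X_{1..n}) (ea eb : nat) : 'X_{1..n} :=
  [multinom (if k == i then ea else if k == j then eb else m k) | k < n].

(* Writing a monomial
   as f a^u b^v (f divisible by neither a nor b):
   (1) v < t, and it lies in I;
   (2) v = u + t (s = u), and it lies in I;
   (3) u = l, v = s + t with s < l: f a^l b^(s+t) \in I or f a^s b^(l+t) \in I;
   (4) u = s, v = l + t with s < l: both f a^l b^(s+t) and f a^s b^(l+t) in I. *)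
Definition shift_mon (I : {mpoly K[n]} -> Prop) (i j : 'I_n) (t : nat)
    (m : 'X_{1..n}) : Prop :=
  let f := m in
  (exists s r : nat, (r < t)%N /\ m = setab i j f s r /\ I 'X_[m])
  \/ (exists s : nat, m = setab i j f s (s + t) /\ I 'X_[m])
  \/ (exists s l : nat, (s < l)%N /\ m = setab i j f l (s + t) /\
        (I 'X_[setab i j f l (s + t)] \/ I 'X_[setab i j f s (l + t)]))
  \/ (exists s l : nat, (s < l)%N /\ m = setab i j f s (l + t) /\
        I 'X_[setab i j f l (s + t)] /\ I 'X_[setab i j f s (l + t)]).

Definition Shift (I : {mpoly K[n]} -> Prop) (i j : 'I_n) (t : nat)
  : {mpoly K[n]} -> Prop :=
  monomial_span (shift_mon I i j t).

End Defs.

(* Every monomial x^m of an element of J lies in J, hence in I.  Write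
   x^m = f a^u b^v.  If v < t or v = u + t it is a spanning monomial of
   type (1) or (2).  Otherwise v = s + t with s <> u: for s < u it is of
   type (3) because x^m itself lies in I, and for u < s it is of type (4)
   because strong stability moves s - u factors b onto a, giving
   f a^s b^(u+t) in J, hence in I. *)

From mathcomp Require Import all_boot all_algebra.
From mathcomp Require Import mpoly.
From mathcomp Require Import zify.

Set Implicit Arguments.
Unset Strict Implicit.
Local Open Scope ring_scope.

Section Setab.
Variables (n : nat) (i j : 'I_n).
Hypothesis ltij : (i < j)%N.

Lemma eq_ji_false : (j == i) = false.
Proof. exact: gtn_eqF ltij. Qed.

Lemma setab_i (m : 'X_{1..n}) ea eb : setab i j m ea eb i = ea.
Proof. by rewrite mnmE eqxx. Qed.

Lemma setab_j (m : 'X_{1..n}) ea eb : setab i j m ea eb j = eb.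
Proof. by rewrite mnmE eq_ji_false eqxx. Qed.

Lemma setab_id (m : 'X_{1..n}) : setab i j m (m i) (m j) = m.
Proof.
apply/mnmP=> k; rewrite mnmE.
by case: (eqVneq k i) => [->|_] //; case: (eqVneq k j) => [->|].
Qed.

Lemma setab_setab (m : 'X_{1..n}) ea eb ea' eb' :
  setab i j (setab i j m ea eb) ea' eb' = setab i j m ea' eb'.
Proof. by apply/mnmP=> k; rewrite !mnmE; case: (k == i) => //; case: (k == j). Qed.

End Setab.

Lemma monomial_span_msupp (n : nat) (K : fieldType) (S : 'X_{1..n} -> Prop)
    (p : {mpoly K[n]}) :
  (forall m, m \in msupp p -> S m) -> monomial_span S p.
Proof. by move=> hS; exists (msupp p), (fun m => p@_m); split; last exact: mpolyE. Qed.

Section StronglyStable.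
Variables (n : nat) (K : fieldType) (J : {mpoly K[n]} -> Prop).
Hypothesis ssJ : strongly_stable J.

Lemma strongly_stable_msupp p (m : 'X_{1..n}) : J p -> m \in msupp p -> J 'X_[m].
Proof. by case: ssJ => [[_ hmon] _]; exact: hmon. Qed.

Variables (i j : 'I_n).
Hypothesis ltij : (i < j)%N.

Lemma strongly_stable_move1 (m : 'X_{1..n}) : (0 < m j)%N -> J 'X_[m] ->
  J 'X_[setab i j m (m i).+1 (m j).-1].
Proof.
move=> mj_gt0 Jm; set m0 := setab i j m (m i) (m j).-1.
have ->: setab i j m (m i).+1 (m j).-1 = (U_(i) + m0)%MM.
  apply/mnmP=> k; rewrite mnmDE mnm1E !mnmE.
  by case: eqVneq => [<-|_].
have dec_m : m = (U_(j) + m0)%MM.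
  apply/mnmP=> k; rewrite mnmDE mnm1E !mnmE.
  case: eqVneq => [<-|_]; first by rewrite (eq_ji_false ltij); case: (m j) mj_gt0.
  by case: (eqVneq k i) => [->|].
by rewrite mpolyXD; apply: (ssJ.2 m0 j i ltij); rewrite -mpolyXD -dec_m.
Qed.

Lemma strongly_stable_move (m : 'X_{1..n}) d : (d <= m j)%N -> J 'X_[m] ->
  J 'X_[setab i j m (m i + d) (m j - d)].
Proof.
move=> + Jm; elim: d => [|d IHd] lt_d; first by rewrite addn0 subn0 setab_id.
have mj_gt0 : (0 < setab i j m (m i + d) (m j - d) j)%N.
  by rewrite (setab_j ltij) subn_gt0.
have := strongly_stable_move1 mj_gt0 (IHd (ltnW lt_d)).
by rewrite setab_i (setab_j ltij) setab_setab addnS subnS.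
Qed.

End StronglyStable.

Lemma shift_mon_strongly_stable (n : nat) (K : fieldType)
    (J I : {mpoly K[n]} -> Prop) (i j : 'I_n) (t : nat) (m : 'X_{1..n}) :
  strongly_stable J -> (forall p, J p -> I p) -> (i < j)%N ->
  J 'X_[m] -> shift_mon I i j t m.
Proof.
move=> ssJ JsubI ltij Jm; have Im := JsubI _ Jm.
have m_setab := esym (setab_id i j m).
case: (ltnP (m j) t) => [lt_mj_t | le_t_mj].
  by left; exists (m i), (m j).
have mjE : m = setab i j m (m i) (m j - t + t) by rewrite subnK.
right; case: (eqVneq (m j) (m i + t)%N) => [mj_eq | mj_neq].
  by left; exists (m i); rewrite -mj_eq.
right; case: (ltnP (m j - t) (m i)) => [lt_s_u | le_u_s].
  by left; exists (m j - t)%N, (m i); rewrite -mjE; split; last split; last left.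
right; exists (m i), (m j - t)%N; rewrite -mjE.
have lt_u_s : (m i < m j - t)%N by lia.
do 3 split=> //; apply: JsubI.
have d_le : (m j - t - m i <= m j)%N by lia.
have := strongly_stable_move ssJ ltij d_le Jm.
by congr (J 'X_[setab _ _ _ _ _]); lia.
Qed.

Theorem mainTheorem3 (K : fieldType) (n r : nat) (e : nat -> nat)
    (J I : {mpoly K[n]} -> Prop) (i j : 'I_n) (t : nat) :
  (r <= n)%N ->
  (forall k, (k < r)%N -> (2 <= e k)%N) ->
  (forall k l, (k <= l)%N -> (l < r)%N -> (e k <= e l)%N) ->
  strongly_stable J ->
  monomial_ideal I ->
  (* I contains P + J, P = (x_1^e_1, ..., x_r^e_r) *)
  (forall k (hk : (k < n)%N), (k < r)%N -> I ('X_(Ordinal hk) ^+ e k)) ->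
  (forall p, J p -> I p) ->
  (i < j)%N ->
  (0 < t)%N ->
  forall p, J p -> Shift I i j t p.
Proof.
move=> _ _ _ ssJ _ _ JsubI ltij _ p Jp.
apply: monomial_span_msupp => m m_in.
exact: shift_mon_strongly_stable ssJ JsubI ltij (strongly_stable_msupp ssJ Jp m_in).
Qed.
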